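(* Let $p\in k^\times$, $A_p=k\langle x_1,x_2\rangle/(x_2x_1-px_1x_2)$, and $K$ a Hopf algebra with bijective antipode $S$ such that $A_p$ is a right $K$-comodule algebra via $\rho(x_i)=x_1\otimes y_{1i}+x_2\otimes y_{2i}$, with homological codeterminant ${\sf D}$. Then $$S(y_{11})=y_{22}{\sf D}^{-1},\quad S(y_{12})=-p\,y_{12}{\sf D}^{-1},\quad S(y_{21})=-p^{-1}y_{21}{\sf D}^{-1},\quad S(y_{22})=y_{11}{\sf D}^{-1}.$$
   Context: The Ext-algebra of $A_p$ is $E=k\langle x_1^*,x_2^*\rangle/(x_2^*x_1^*+p^{-1}x_1^*x_2^*,(x_1^* )^2,(x_2^* )^2)$, a left $K$-comodule algebra via $\rho^!(x_i^* )=\sum_{s=1}^2y_{is}\otimes x_s^*$. The homological codeterminant is the grouplike ${\sf D}\in K$ with $\rho^!(x_1^*x_2^* )={\sf D}\otimes x_1^*x_2^*$. *)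

(* Tensors of A (x) B are represented by finite lists of pure tensors
   s : seq (A * B), standing for \sum_(u <- s) u.1 (x) u.2; two such lists
   denote the same tensor iff they agree under every bilinear map (the
   universal property of the tensor product). *)
From HB Require Import structures.
From mathcomp Require Import all_boot all_order all_algebra.
Set Implicit Arguments. Unset Strict Implicit. Unset Printing Implicit Defensive.
Import Order.TTheory GRing.Theory Num.Theory.
Local Open Scope ring_scope.

Section Defs.
Variable k : fieldType.

Definition bilin (A B W : lmodType k) (f : A -> B -> W) : Prop :=
  (forall (c : k) a a' b, f (c *: a + a') b = c *: f a b + f a' b) /\
  (forall (c : k) a b b', f a (c *: b + b') = c *: f a b + f a b').

Definition trilin (A B C W : lmodType k) (f : A -> B -> C -> W) : Prop :=
  (forall (c : k) a a' b d, f (c *: a + a') b d = c *: f a b d + f a' b d) /\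
  (forall (c : k) a b b' d, f a (c *: b + b') d = c *: f a b d + f a b' d) /\
  (forall (c : k) a b d d', f a b (c *: d + d') = c *: f a b d + f a b d').

Definition teq2 (A B : lmodType k) (s t : seq (A * B)) : Prop :=
  forall (W : lmodType k) (f : A -> B -> W), bilin f ->
    \sum_(u <- s) f u.1 u.2 = \sum_(u <- t) f u.1 u.2.

Definition teq3 (A B C : lmodType k) (s t : seq (A * B * C)) : Prop :=
  forall (W : lmodType k) (f : A -> B -> C -> W), trilin f ->
    \sum_(u <- s) f u.1.1 u.1.2 u.2 = \sum_(u <- t) f u.1.1 u.1.2 u.2.

Definition alg_hom (A B : algType k) (f : A -> B) : Prop :=
  (forall (c : k) a a', f (c *: a + a') = c *: f a + f a') /\
  (forall a a', f (a * a') = f a * f a') /\ f 1 = 1.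

Definition is_hopf (K : algType k) (comul : K -> seq (K * K)) (eps : K -> k)
    (S : K -> K) : Prop :=
  (
   (forall (c : k) x y, teq2 (comul (c *: x + y))
       ([seq (c *: u.1, u.2) | u <- comul x] ++ comul y)) /\
   (forall x y, teq2 (comul (x * y))
       [seq (u.1 * v.1, u.2 * v.2) | u <- comul x, v <- comul y]) /\
   teq2 (comul 1) [:: (1, 1)]) /\
  (forall x, teq3 [seq (v.1, v.2, u.2) | u <- comul x, v <- comul u.1]
                  [seq (u.1, v.1, v.2) | u <- comul x, v <- comul u.2]) /\
  ((forall (c : k) x y, eps (c *: x + y) = c * eps x + eps y) /\
   (forall x y, eps (x * y) = eps x * eps y) /\ eps 1 = 1) /\
  (forall x, \sum_(u <- comul x) eps u.1 *: u.2 = x /\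
             \sum_(u <- comul x) eps u.2 *: u.1 = x) /\
  (forall (c : k) x y, S (c *: x + y) = c *: S x + S y) /\
  (forall x, \sum_(u <- comul x) S u.1 * u.2 = eps x *: 1 /\
             \sum_(u <- comul x) u.1 * S u.2 = eps x *: 1).

Definition right_comod_alg (K : algType k) (comul : K -> seq (K * K))
    (eps : K -> k) (A : algType k) (rho : A -> seq (A * K)) : Prop :=
  [/\ (forall (c : k) a b, teq2 (rho (c *: a + b))
          ([seq (c *: u.1, u.2) | u <- rho a] ++ rho b)),
      (forall a b, teq2 (rho (a * b))
          [seq (u.1 * v.1, u.2 * v.2) | u <- rho a, v <- rho b]),
      teq2 (rho 1) [:: (1, 1)],
      (forall a, teq3 [seq (v.1, v.2, u.2) | u <- rho a, v <- rho u.1]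
                      [seq (u.1, v.1, v.2) | u <- rho a, v <- comul u.2]) &
      (forall a, \sum_(u <- rho a) eps u.2 *: u.1 = a)].

Definition left_comod_alg (K : algType k) (comul : K -> seq (K * K))
    (eps : K -> k) (E : algType k) (lam : E -> seq (K * E)) : Prop :=
  [/\ (forall (c : k) a b, teq2 (lam (c *: a + b))
          ([seq (u.1, c *: u.2) | u <- lam a] ++ lam b)),
      (forall a b, teq2 (lam (a * b))
          [seq (u.1 * v.1, u.2 * v.2) | u <- lam a, v <- lam b]),
      teq2 (lam 1) [:: (1, 1)],
      (forall a, teq3 [seq (v.1, v.2, u.2) | u <- lam a, v <- comul u.1]
                      [seq (u.1, v.1, v.2) | u <- lam a, v <- lam u.2]) &
      (forall a, \sum_(u <- lam a) eps u.1 *: u.2 = a)].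

Definition is_Ap (p : k) (A : algType k) (x1 x2 : A) : Prop :=
  x2 * x1 = p *: (x1 * x2) /\
  forall (B : algType k) (b1 b2 : B), b2 * b1 = p *: (b1 * b2) ->
    exists f : A -> B, [/\ alg_hom f, f x1 = b1, f x2 = b2 &
      forall g : A -> B, alg_hom g -> g x1 = b1 -> g x2 = b2 -> g =1 f].

Definition is_Ext_Ap (p : k) (E : algType k) (z1 z2 : E) : Prop :=
  [/\ z2 * z1 + p^-1 *: (z1 * z2) = 0, z1 * z1 = 0, z2 * z2 = 0 &
  forall (B : algType k) (b1 b2 : B),
    b2 * b1 + p^-1 *: (b1 * b2) = 0 -> b1 * b1 = 0 -> b2 * b2 = 0 ->
    exists f : E -> B, [/\ alg_hom f, f z1 = b1, f z2 = b2 &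
      forall g : E -> B, alg_hom g -> g z1 = b1 -> g z2 = b2 -> g =1 f]].

Definition grouplike (K : algType k) (comul : K -> seq (K * K))
    (eps : K -> k) (g : K) : Prop :=
  teq2 (comul g) [:: (g, g)] /\ eps g = 1.

(* D is the homological codeterminant of the coaction with matrix (y_ij):
   the Ext-algebra E of A_p is a left K-comodule algebra via
   rho^!(z_i) = y_i1 (x) z_1 + y_i2 (x) z_2, and D is the grouplike with
   rho^!(z_1 z_2) = D (x) z_1 z_2. *)
Definition hom_codet (p : k) (K : algType k) (comul : K -> seq (K * K))
    (eps : K -> k) (y11 y12 y21 y22 D : K) : Prop :=
  exists (E : algType k) (z1 z2 : E) (lam : E -> seq (K * E)),
    [/\ is_Ext_Ap p z1 z2 /\ left_comod_alg comul eps lam,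
        teq2 (lam z1) [:: (y11, z1); (y12, z2)],
        teq2 (lam z2) [:: (y21, z1); (y22, z2)],
        teq2 (lam (z1 * z2)) [:: (D, z1 * z2)] &
        grouplike comul eps D].

End Defs.

From mathcomp Require Import all_boot all_algebra.
Import GRing.Theory.
Local Open Scope ring_scope.
Set Implicit Arguments. Unset Strict Implicit. Unset Printing Implicit Defensive.

(* Let Y = (y_ij) be the coefficient matrix of the coaction
   and S(Y) = (S y_ij).  Only the Ext-algebra side of the hypotheses is
   needed: E = k<z1,z2>/(z2 z1 + p^-1 z1 z2, z1^2, z2^2) carries the left
   coaction lam(z_i) = y_i1 (x) z1 + y_i2 (x) z2, lam(z1 z2) = D (x) z1 z2.
   1. Tensors are only known through bilinear maps, so we read lam through
      linear forms phi on E: coef phi = (id (x) phi) o lam : E -> K.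
      A concrete 4-dimensional representation of E supplies linear forms
      dual to z1, z2 and one detecting z1 z2 (ext_dual_forms).
   2. Coassociativity of lam composed with the antipode axiom gives
      S(Y) Y = 1 (antipode_left_inverse).
   3. The coefficients of z1^2 = 0, z2^2 = 0, z2 z1 = -p^-1 z1 z2 and
      z1 z2 give quantum-plane relations among the y_ij and the expansion
      D = y11 y22 - p^-1 y12 y21 (codet_relations).  D is grouplike, hence
      invertible with inverse S D (grouplike_unit), and these relations
      exhibit an explicit right inverse T of Y (qdet_right_inverse).
   4. A left inverse equals a right inverse, so S(Y) = T; reading off the
      entries is the theorem. *)

Section Mx2.
Variable R : pzRingType.

Definition mx2 (a b c d : R) : 'M[R]_2 :=
  \matrix_(i, j) if i == 0 :> nat then (if j == 0 :> nat then a else b)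
                 else (if j == 0 :> nat then c else d).

Lemma mx2_mul a b c d a' b' c' d' :
  mx2 a b c d *m mx2 a' b' c' d' =
  mx2 (a * a' + b * c') (a * b' + b * d') (c * a' + d * c') (c * b' + d * d').
Proof.
apply/matrixP => i j; rewrite !mxE !big_ord_recl big_ord0 !mxE addr0 /=.
by case: i => [[|[|i]] ?]; case: j => [[|[|j]] ?].
Qed.

Lemma mx2_1 : mx2 1 0 0 1 = 1%:M.
Proof.
apply/matrixP => i j; rewrite !mxE.
by case: i => [[|[|i]] ?]; case: j => [[|[|j]] ?].
Qed.

Lemma mx2_inj a b c d a' b' c' d' : mx2 a b c d = mx2 a' b' c' d' ->
  [/\ a = a', b = b', c = c' & d = d'].
Proof.
move/matrixP => e.
have := e ord0 ord0; have := e ord0 ord_max.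
have := e ord_max ord0; have := e ord_max ord_max.
by rewrite !mxE /=.
Qed.

Lemma mx_inv_uniq n (L Y T : 'M[R]_n) : L *m Y = 1%:M -> Y *m T = 1%:M -> L = T.
Proof. by move=> LY YT; rewrite -[L]mulmx1 -YT mulmxA LY mul1mx. Qed.

End Mx2.

Section Tensors.
Variable k : fieldType.

Section Bilinear.
Variables (A B W : lmodType k) (f : A -> B -> W).
Hypothesis hf : bilin f.

Lemma bilin0r a : f a 0 = 0.
Proof.
apply: (addrI (f a 0)); rewrite addr0.
by have := hf.2 1 a 0 0; rewrite !scale1r addr0 => <-.
Qed.

Lemma bilinZr c a b : f a (c *: b) = c *: f a b.
Proof. by have := hf.2 c a b 0; rewrite addr0 bilin0r !addr0. Qed.

End Bilinear.

Definition linform (E : lmodType k) (phi : E -> k) : Prop :=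
  forall c a b, phi (c *: a + b) = c * phi a + phi b.

Section LinearForms.
Variables (E : lmodType k) (phi : E -> k).
Hypothesis hphi : linform phi.

Lemma linform0 : phi 0 = 0.
Proof.
apply: (addrI (phi 0)); rewrite addr0.
by have := hphi 1 0 0; rewrite scale1r addr0 mul1r => <-.
Qed.

Lemma linformZ c a : phi (c *: a) = c * phi a.
Proof. by have := hphi c a 0; rewrite addr0 linform0 addr0. Qed.

Lemma linformD a b : phi (a + b) = phi a + phi b.
Proof. by have := hphi 1 a b; rewrite scale1r mul1r. Qed.

Lemma linform_sum (I : Type) (s : seq I) (G : I -> E) :
  phi (\sum_(u <- s) G u) = \sum_(u <- s) phi (G u).
Proof.
elim: s => [|x s IH]; first by rewrite !big_nil linform0.
by rewrite !big_cons linformD IH.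
Qed.

Lemma bilin_form (A : lmodType k) : bilin (fun (a : A) (b : E) => phi b *: a).
Proof.
split=> c a a' b; first by rewrite scalerDr !scalerA mulrC.
by rewrite hphi scalerDl scalerA.
Qed.

End LinearForms.

Lemma teq2_mul (A B : algType k) (s s' t t' : seq (A * B)) :
  teq2 s s' -> teq2 t t' ->
  teq2 [seq (u.1 * v.1, u.2 * v.2) | u <- s, v <- t]
       [seq (u.1 * v.1, u.2 * v.2) | u <- s', v <- t'].
Proof.
move=> hs ht W f hf; rewrite !big_allpairs_dep /=.
have right_factor (u : A * B) : \sum_(v <- t) f (u.1 * v.1) (u.2 * v.2) =
                                \sum_(v <- t') f (u.1 * v.1) (u.2 * v.2).
  apply: (ht W (fun b e => f (u.1 * b) (u.2 * e))).
  by split=> c a a' b; rewrite mulrDr -scalerAr ?hf.1 ?hf.2.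
rewrite (eq_bigr _ (fun u _ => right_factor u)).
apply: (hs W (fun a c => \sum_(v <- t') f (a * v.1) (c * v.2))).
split=> c a a' b; rewrite scaler_sumr -big_split; apply: eq_bigr => v _;
  by rewrite mulrDl -scalerAl ?hf.1 ?hf.2.
Qed.

End Tensors.

Section LeftCoaction.
Variables (k : fieldType) (K E : algType k) (lam : E -> seq (K * E)).

Hypothesis lam_lin : forall (c : k) a b,
  teq2 (lam (c *: a + b)) ([seq (u.1, c *: u.2) | u <- lam a] ++ lam b).
Hypothesis lam_mul : forall a b,
  teq2 (lam (a * b)) [seq (u.1 * v.1, u.2 * v.2) | u <- lam a, v <- lam b].

Lemma lam_sum_lin (W : lmodType k) (f : K -> E -> W) c a b : bilin f ->
  \sum_(u <- lam (c *: a + b)) f u.1 u.2 =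
  c *: \sum_(u <- lam a) f u.1 u.2 + \sum_(u <- lam b) f u.1 u.2.
Proof.
move=> hf; rewrite (lam_lin c a b hf) big_cat big_map /= scaler_sumr.
by congr (_ + _); apply: eq_bigr => u _; rewrite bilinZr.
Qed.

Lemma lam_sum0 (W : lmodType k) (f : K -> E -> W) : bilin f ->
  \sum_(u <- lam 0) f u.1 u.2 = 0.
Proof.
move=> hf; apply: (addrI (\sum_(u <- lam 0) f u.1 u.2)); rewrite addr0.
by have := lam_sum_lin 1 0 0 hf; rewrite !scale1r addr0 => <-.
Qed.

(* coef phi = (id (x) phi) o lam : E -> K, the K-coefficient of lam along the
   linear form phi. *)
Definition coef (phi : E -> k) (e : E) : K := \sum_(u <- lam e) phi u.2 *: u.1.

Section Coef.
Variable phi : E -> k.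
Hypothesis hphi : linform phi.

Lemma coef0 : coef phi 0 = 0.
Proof. exact: lam_sum0 (bilin_form hphi K). Qed.

Lemma coefZ c a : coef phi (c *: a) = c *: coef phi a.
Proof.
rewrite /coef -[c *: a]addr0 (lam_sum_lin _ _ _ (bilin_form hphi K)).
by rewrite -/(coef phi 0) coef0 addr0.
Qed.

Lemma coef_teq e s : teq2 (lam e) s -> coef phi e = \sum_(u <- s) phi u.2 *: u.1.
Proof. by move=> he; apply: (he K _ (bilin_form hphi K)). Qed.

Lemma coef_mul (za zb z1 z2 : E) (a1 a2 b1 b2 : K) :
  teq2 (lam za) [:: (a1, z1); (a2, z2)] ->
  teq2 (lam zb) [:: (b1, z1); (b2, z2)] ->
  coef phi (za * zb) =
  phi (z1 * z1) *: (a1 * b1) + phi (z1 * z2) *: (a1 * b2)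
  + (phi (z2 * z1) *: (a2 * b1) + phi (z2 * z2) *: (a2 * b2)).
Proof.
move=> ha hb; rewrite (coef_teq (lam_mul za zb)).
rewrite (teq2_mul ha hb (bilin_form hphi K)) big_allpairs_dep /=.
by rewrite !big_cons !big_nil /= !addr0.
Qed.

Lemma codet_relations (q : k) (z1 z2 : E) (y11 y12 y21 y22 D : K) :
  phi (z1 * z2) = 1 ->
  z2 * z1 + q *: (z1 * z2) = 0 -> z1 * z1 = 0 -> z2 * z2 = 0 ->
  teq2 (lam z1) [:: (y11, z1); (y12, z2)] ->
  teq2 (lam z2) [:: (y21, z1); (y22, z2)] ->
  teq2 (lam (z1 * z2)) [:: (D, z1 * z2)] ->
  [/\ y11 * y12 = q *: (y12 * y11), y21 * y22 = q *: (y22 * y21),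
      y11 * y22 - q *: (y12 * y21) = D &
      y21 * y12 - q *: (y22 * y11) = - (q *: D)].
Proof.
move=> phi12 rel21 rel11 rel22 h1 h2 h12.
have z21E : z2 * z1 = (- q) *: (z1 * z2).
  by apply/eqP; rewrite scaleNr -addr_eq0 rel21.
have phi11 : phi (z1 * z1) = 0 by rewrite rel11 linform0.
have phi22 : phi (z2 * z2) = 0 by rewrite rel22 linform0.
have phi21 : phi (z2 * z1) = - q by rewrite z21E linformZ // phi12 mulr1.
have coef12 : coef phi (z1 * z2) = D.
  by rewrite (coef_teq h12) big_cons big_nil /= phi12 scale1r addr0.
have := coef_mul h1 h1; have := coef_mul h2 h2; have := coef_mul h1 h2.
have := coef_mul h2 h1.
rewrite phi11 phi12 phi21 phi22 !scale0r !scale1r !scaleNr !add0r !addr0.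
rewrite {1}z21E coefZ coef12 rel11 rel22 coef0 // => c21 c12 c22 c11.
split; last by rewrite -c21 scaleNr.
- by apply/eqP; rewrite -subr_eq0 -c11.
- by apply/eqP; rewrite -subr_eq0 -c22.
- by rewrite -c12.
Qed.

End Coef.

Section Antipode.
Variables (comul : K -> seq (K * K)) (eps : K -> k) (S : K -> K).
Hypothesis S_lin : forall (c : k) x y, S (c *: x + y) = c *: S x + S y.
Hypothesis antipode_l : forall x, \sum_(u <- comul x) S u.1 * u.2 = eps x *: 1.
Hypothesis lam_coassoc : forall a,
  teq3 [seq (v.1, v.2, u.2) | u <- lam a, v <- comul u.1]
       [seq (u.1, v.1, v.2) | u <- lam a, v <- lam u.2].
Hypothesis lam_counit : forall a, \sum_(u <- lam a) eps u.1 *: u.2 = a.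

(* Evaluate coassociativity at z on the trilinear map
   (a, b, e) |-> phi e *: S a * b: the left side collapses by the antipode
   and counit axioms to phi z *: 1, the right side is one entry of
   S(Y) Y, where Y is the coefficient matrix of the subcomodule
   span(z1, z2) and z has coefficient row (y1, y2). *)
Lemma antipode_row (phi : E -> k) (z z1 z2 : E) (y1 y2 y11 y12 y21 y22 : K) :
  linform phi ->
  teq2 (lam z) [:: (y1, z1); (y2, z2)] ->
  teq2 (lam z1) [:: (y11, z1); (y12, z2)] ->
  teq2 (lam z2) [:: (y21, z1); (y22, z2)] ->
  phi z *: 1 = phi z1 *: (S y1 * y11 + S y2 * y21)
             + phi z2 *: (S y1 * y12 + S y2 * y22).
Proof.
move=> hphi hz h1 h2.
pose f (a b : K) (e : E) := phi e *: (S a * b).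
have hf : trilin f.
  split; [|split] => c a b b' d; rewrite /f.
  - by rewrite S_lin mulrDl -scalerAl scalerDr !scalerA (mulrC c).
  - by rewrite mulrDr -scalerAr scalerDr !scalerA (mulrC c).
  - by rewrite hphi scalerDl scalerA.
have := lam_coassoc z hf; rewrite !big_allpairs_dep /=.
have -> : \sum_(u <- lam z) \sum_(v <- comul u.1) f v.1 v.2 u.2 = phi z *: 1.
  under eq_bigr => u _ do rewrite /f -scaler_sumr antipode_l scalerA.
  rewrite -scaler_suml -{2}(lam_counit z) linform_sum //.
  by congr (_ *: _); apply: eq_bigr => u _; rewrite linformZ // mulrC.
pose g (a : K) (e : E) := \sum_(v <- lam e) f a v.1 v.2.
have hfa a : bilin (f a) by split=> c b b' d; [exact: hf.2.1 | exact: hf.2.2].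
have hg : bilin g.
  split=> c a a' b; last exact: lam_sum_lin (hfa a).
  by rewrite /g scaler_sumr -big_split; apply: eq_bigr => v _; exact: hf.1.
rewrite (hz K g hg) /g !big_cons !big_nil /= (h1 K _ (hfa y1)) (h2 K _ (hfa y2)).
rewrite !big_cons !big_nil /f /= !addr0 => ->.
by rewrite !scalerDr addrACA.
Qed.

Lemma antipode_left_inverse (phi1 phi2 : E -> k) (z1 z2 : E) (y11 y12 y21 y22 : K) :
  linform phi1 -> linform phi2 ->
  [/\ phi1 z1 = 1, phi1 z2 = 0, phi2 z1 = 0 & phi2 z2 = 1] ->
  teq2 (lam z1) [:: (y11, z1); (y12, z2)] ->
  teq2 (lam z2) [:: (y21, z1); (y22, z2)] ->
  mx2 (S y11) (S y12) (S y21) (S y22) *m mx2 y11 y12 y21 y22 = 1%:M.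
Proof.
move=> hphi1 hphi2 [e11 e12 e21 e22] h1 h2.
have := antipode_row hphi1 h1 h1 h2; have := antipode_row hphi2 h1 h1 h2.
have := antipode_row hphi1 h2 h1 h2; have := antipode_row hphi2 h2 h1 h2.
rewrite e11 e12 e21 e22 !scale1r !scale0r !addr0 !add0r => r22 r21 r12 r11.
by rewrite mx2_mul -mx2_1 -r11 -r12 -r21 -r22.
Qed.

End Antipode.
End LeftCoaction.

(* A concrete model of the Ext algebra: its left regular
   representation of k<z1,z2>/(z2 z1 + q z1 z2, z1^2, z2^2) on the basis
   (1, z1, z2, z1 z2) = (e0, e1, e2, e3) of k^4, where z1 acts by
   e0 -> e1, e2 -> e3 and z2 by e0 -> e2, e1 -> -q e3. *)
Section ExtModel.
Variables (k : fieldType) (q : k).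

Definition e0 : 'I_4 := @Ordinal 4 0 erefl.
Definition e1 : 'I_4 := @Ordinal 4 1 erefl.
Definition e2 : 'I_4 := @Ordinal 4 2 erefl.
Definition e3 : 'I_4 := @Ordinal 4 3 erefl.
Definition Z1 : 'M[k]_4 := delta_mx e1 e0 + delta_mx e3 e2.
Definition Z2 : 'M[k]_4 := delta_mx e2 e0 - q *: delta_mx e3 e1.

Lemma Z1Z1 : Z1 * Z1 = 0.
Proof. by rewrite -mulmxE /Z1 !(mulmxDl, mulmxDr) !mul_delta_mx_cond /= !mulr0n !addr0. Qed.

Lemma Z2Z2 : Z2 * Z2 = 0.
Proof.
rewrite -mulmxE /Z2 !(mulmxBl, mulmxBr) -!scalemxAl -!scalemxAr.
by rewrite !mul_delta_mx_cond /= !mulr0n !scaler0 !subr0.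
Qed.

Lemma Z1Z2 : Z1 * Z2 = delta_mx e3 e0.
Proof.
rewrite -mulmxE /Z1 /Z2 !(mulmxBr, mulmxDl) -!scalemxAr.
by rewrite !mul_delta_mx_cond /= !mulr0n ?mulr1n !scaler0 !subr0 !add0r.
Qed.

Lemma Z2Z1 : Z2 * Z1 + q *: (Z1 * Z2) = 0.
Proof.
rewrite Z1Z2 -mulmxE /Z1 /Z2 !(mulmxBl, mulmxDr) -!scalemxAl.
by rewrite !mul_delta_mx_cond /= !mulr0n ?mulr1n !scaler0 !subr0 !addr0 !add0r addNr.
Qed.

End ExtModel.

(* The first column of the model gives linear forms on the Ext algebra
   dual to z1, z2 and detecting z1 z2. *)
Lemma ext_dual_forms (k : fieldType) (p : k) (E : algType k) (z1 z2 : E) :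
  is_Ext_Ap p z1 z2 ->
  exists phi1 phi2 phi3 : E -> k,
    [/\ linform phi1, linform phi2, linform phi3,
        [/\ phi1 z1 = 1, phi1 z2 = 0, phi2 z1 = 0 & phi2 z2 = 1] &
        phi3 (z1 * z2) = 1].
Proof.
move=> [_ _ _ univ].
have [g [[g_lin [g_mul _]] gz1 gz2 _]] :=
  univ _ _ _ (@Z2Z1 k p^-1) (@Z1Z1 k) (@Z2Z2 k p^-1).
pose phi (i : 'I_4) (e : E) := g e i e0.
have hphi i : linform (phi i) by move=> c a b; rewrite /phi g_lin !mxE.
exists (phi e1), (phi e2), (phi e3); split => //.
  by rewrite /phi gz1 gz2 !mxE /= mulr0 !subr0 !addr0.
by rewrite /phi g_mul gz1 gz2 Z1Z2 mxE.
Qed.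

Lemma grouplike_unit (k : fieldType) (K : algType k) (comul : K -> seq (K * K))
    (eps : K -> k) (S : K -> K) (g : K) :
  is_hopf comul eps S -> grouplike comul eps g -> g * S g = 1 /\ S g * g = 1.
Proof.
case=> _ [_ [_ [_ [S_lin antipode]]]] [g_comul g_eps].
have bilin_l : bilin (fun a b : K => S a * b).
  by split=> c a a' b; rewrite ?S_lin ?mulrDl ?mulrDr -?scalerAl -?scalerAr.
have bilin_r : bilin (fun a b : K => a * S b).
  by split=> c a a' b; rewrite ?S_lin ?mulrDl ?mulrDr -?scalerAl -?scalerAr.
have [al ar] := antipode g.
move: al ar; rewrite (g_comul _ _ bilin_l) (g_comul _ _ bilin_r) g_eps.
by rewrite !big_cons !big_nil !addr0 scale1r.
Qed.

Lemma qdet_right_inverse (k : fieldType) (K : algType k) (p q : k)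
    (y11 y12 y21 y22 D Di : K) :
  p * q = 1 -> D * Di = 1 ->
  [/\ y11 * y12 = q *: (y12 * y11), y21 * y22 = q *: (y22 * y21),
      y11 * y22 - q *: (y12 * y21) = D &
      y21 * y12 - q *: (y22 * y11) = - (q *: D)] ->
  mx2 y11 y12 y21 y22 *m
    mx2 (y22 * Di) (- (p *: (y12 * Di))) (- (q *: (y21 * Di))) (y11 * Di)
  = 1%:M.
Proof.
move=> pq DDi [r11 r22 det r21].
rewrite mx2_mul -mx2_1 !mulrN -!scalerAr !mulrA; congr mx2.
- by rewrite scalerAl -mulrBl det DDi.
- by rewrite r11 -scalerAl scalerA pq scale1r addNr.
- by rewrite scalerAl -mulrBl r22 subrr mul0r.
- have -> : y21 * y12 = q *: (y22 * y11) - q *: D by rewrite -r21 addrC subrK.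
  by rewrite -scalerBr -scalerAl scalerA pq scale1r mulrBl opprB subrK DDi.
Qed.

Theorem lemma5p2 (k : fieldType) (p : k) (hp : p != 0)
  (K : algType k) (comul : K -> seq (K * K)) (eps : K -> k) (S : K -> K)
  (hK : is_hopf comul eps S) (hS : bijective S)
  (A : algType k) (x1 x2 : A) (hA : is_Ap p x1 x2)
  (rho : A -> seq (A * K)) (y11 y12 y21 y22 : K)
  (hrho : right_comod_alg comul eps rho)
  (hx1 : teq2 (rho x1) [:: (x1, y11); (x2, y21)])
  (hx2 : teq2 (rho x2) [:: (x1, y12); (x2, y22)])
  (D : K) (hD : hom_codet p comul eps y11 y12 y21 y22 D) :
  exists Dinv : K, (D * Dinv = 1 /\ Dinv * D = 1) /\
    [/\ S y11 = y22 * Dinv, S y12 = - (p *: (y12 * Dinv)),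
    S y21 = - (p^-1 *: (y21 * Dinv)) & S y22 = y11 * Dinv].
Proof.
have [_ [_ [_ [_ [S_lin antipode]]]]] := hK.
have [E [z1 [z2 [lam [[hE hlam] hz1 hz2 hz12 hDg]]]]] := hD.
have [lam_lin lam_mul _ lam_coassoc lam_counit] := hlam.
have [Dinv_r Dinv_l] := grouplike_unit hK hDg.
exists (S D); split => //.
have [phi1 [phi2 [phi3 [hphi1 hphi2 hphi3 dual phi12]]]] := ext_dual_forms hE.
have left_inv := antipode_left_inverse lam_lin S_lin (fun x => (antipode x).1)
  lam_coassoc lam_counit hphi1 hphi2 dual hz1 hz2.
have [rel21 rel11 rel22 _] := hE.
have rels := codet_relations lam_lin lam_mul hphi3 phi12 rel21 rel11 rel22
  hz1 hz2 hz12.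
have right_inv := qdet_right_inverse (mulfV hp) Dinv_r rels.
by have [-> -> -> ->] := mx2_inj (mx_inv_uniq left_inv right_inv).
Qed.
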